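(* Let $J$ be a $\times d$-invariant set, $\delta$ its Hausdorff dimension, $\mu=\mathcal{H}^\delta|_J$, and $\lambda$ Lebesgue measure on $\mathbb{R}$. For $x\ne y$ in $\mathbb{R}$ let $f_{x,y}$ be the unique affine map $\mathbb{R}\to\mathbb{R}$ with $f_{x,y}(x)=0$ and $f_{x,y}(y)=1$. Then: (i) for $\lambda\times\lambda$-almost every $(x,y)\in\mathbb{R}^2$, $f_{x,y}(J)\cap\mathbb{Q}=\emptyset$; (ii) for $\mu\times\lambda$-almost every $(x,y)\in\mathbb{R}^2$, $f_{x,y}(J)\cap\mathbb{Q}=\{0\}$.
   Context: Fix an integer $d\ge2$ and $E\subseteq\{0,\dots,d-1\}$ with $1<\#E<d$. The associated $\times d$-invariant set is $J=\{x\in[0,1]: x=\sum_{i\ge1}a_id^{-i}\text{ for some digits }a_i\in E\}$. *)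

From Stdlib Require Export Reals Lra QArith Qreals List.
Open Scope R_scope.

Definition digitJ (d : nat) (E : list nat) (x : R) : Prop :=
  exists a : nat -> nat,
    (forall i, In (a i) E) /\
    infinite_sum (fun i => INR (a i) / INR d ^ (S i)) x.

(* "the (outer) measure of A is <= r" predicates. *)
Definition set_meas_le := (R -> Prop) -> R -> Prop.

Definition leb_le : set_meas_le := fun A r =>
  forall eps, 0 < eps ->
    exists c e : nat -> R,
      (forall n, c n <= e n) /\
      (forall x, A x -> exists n, c n <= x <= e n) /\
      (forall k, sum_f_R0 (fun n => e n - c n) k <= r + eps).

Definition diam_le (U : R -> Prop) (rho : R) : Prop :=
  forall x y, U x -> U y -> Rabs (x - y) <= rho.

(* Covering sets are given with a positive
   upper bound on their diameter (equivalent for s > 0). *)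
Definition haus_le (s : R) : set_meas_le := fun A r =>
  forall eta, 0 < eta -> forall eps, 0 < eps ->
    exists (U : nat -> R -> Prop) (rho : nat -> R),
      (forall n, 0 < rho n <= eta /\ diam_le (U n) (rho n)) /\
      (forall x, A x -> exists n, U n x) /\
      (forall k, sum_f_R0 (fun n => Rpower (rho n) s) k <= r + eps).

Definition hausdorff_dim (J : R -> Prop) (delta : R) : Prop :=
  0 <= delta /\
  (forall s, delta < s -> haus_le s J 0) /\
  (forall s, 0 < s < delta -> forall r, ~ haus_le s J r).

Definition haus_restr (delta : R) (J : R -> Prop) : set_meas_le :=
  fun A r => haus_le delta (fun t => A t /\ J t) r.

Definition prod_null (m1 m2 : set_meas_le) (N : R -> R -> Prop) : Prop :=
  forall eps, 0 < eps ->
    exists (A B : nat -> R -> Prop) (a b : nat -> R),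
      (forall n, 0 <= a n /\ 0 <= b n /\ m1 (A n) (a n) /\ m2 (B n) (b n)) /\
      (forall x y, N x y -> exists n, A n x /\ B n y) /\
      (forall k, sum_f_R0 (fun n => a n * b n) k <= eps).

Definition faff (x y t : R) : R := (t - x) / (y - x).

(* J is the set of reals whose base-d expansion uses only digits from E, where
   p := #E satisfies 1 < p < d.  The proof rests on three estimates.

   1. Cylinders.  The p^m words of length m over E give p^m intervals of length
      d^-m covering J; hence lambda(J) <= (p/d)^m, which tends to 0.
   2. Dimension.  The fan theorem (König's lemma for E^N) and the uniform mass
      distribution on E^N show H^s(J) > 0 whenever d^s <= p; so the dimension
      delta satisfies p <= d^delta, and the H^delta-mass of a level-n cylinder of
      J is at most d^(-n delta).
   3. Fibres.  For q <> 0, f_{x,y}(t) = q means y = (t - (1-q) x) / q.  When x is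
      within h of a point c, such y with t in J lie in p^m balls of radius
      (d^-m + |1-q| h)/|q|; choosing m and then h makes the product mass small
      over any set X with "fine covers" of bounded mass at every scale h.  Unit
      intervals (for lambda) and J (for mu, by 2.) have such covers.
   The exceptional sets of (i) and (ii) are countable unions, over an integer
   cell M and a rational q, of a diagonal piece, a piece on which some t in J is
   sent to q, and a trivially null piece (J x [M, M+1] for lambda, since
   lambda(J) = 0; (R \ J) x [M, M+1] for mu).  Product-null sets are closed under
   countable unions, which gives the theorem. *)
From Stdlib Require Import Reals Lra Lia List ClassicalEpsilon Classical ZArith Cantor.
Open Scope R_scope.

Definition lsum {A} (f : A -> R) (l : list A) : R :=
  fold_right (fun x acc => f x + acc) 0 l.

Lemma lsum_app {A} (f : A -> R) l1 l2 : lsum f (l1 ++ l2) = lsum f l1 + lsum f l2.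
Proof. induction l1; simpl; [lra|rewrite IHl1; lra]. Qed.

Lemma lsum_nonneg {A} (f : A -> R) l : (forall x, In x l -> 0 <= f x) -> 0 <= lsum f l.
Proof.
  induction l; simpl; intros H; [lra|].
  assert (0 <= f a) by auto. assert (0 <= lsum f l) by auto. lra.
Qed.

Lemma lsum_le {A} (f g : A -> R) l :
  (forall x, In x l -> f x <= g x) -> lsum f l <= lsum g l.
Proof.
  induction l; simpl; intros H; [lra|].
  assert (f a <= g a) by auto. assert (lsum f l <= lsum g l) by auto. lra.
Qed.

Lemma lsum_mem {A} (f : A -> R) l x :
  (forall y, In y l -> 0 <= f y) -> In x l -> f x <= lsum f l.
Proof.
  induction l; simpl; intros H Hx; [tauto|].
  destruct Hx as [->|Hx].
  - assert (0 <= lsum f l) by (apply lsum_nonneg; auto). lra.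
  - assert (f x <= lsum f l) by auto. assert (0 <= f a) by auto. lra.
Qed.

Lemma lsum_const {A} (c : R) (l : list A) : lsum (fun _ => c) l = INR (length l) * c.
Proof. induction l; simpl lsum; simpl length; [simpl; lra|]. rewrite IHl, S_INR. lra. Qed.

Lemma lsum_scal {A} (c : R) (f : A -> R) l : lsum (fun x => c * f x) l = c * lsum f l.
Proof. induction l; simpl; [lra|rewrite IHl; lra]. Qed.

Lemma lsum_swap {A B} (g : A -> B -> R) (l1 : list A) (l2 : list B) :
  lsum (fun a => lsum (g a) l2) l1 = lsum (fun b => lsum (fun a => g a b) l1) l2.
Proof.
  induction l1; simpl.
  - induction l2; simpl; [lra|rewrite <- IHl2; lra].
  - rewrite IHl1. clear IHl1. induction l2; simpl; [lra|rewrite <- IHl2; lra].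
Qed.

Lemma lsum_map {A B} (f : B -> R) (h : A -> B) l : lsum f (map h l) = lsum (fun x => f (h x)) l.
Proof. induction l; simpl; [lra|rewrite IHl; lra]. Qed.

Lemma lsum_ext {A} (f g : A -> R) l : (forall x, In x l -> f x = g x) -> lsum f l = lsum g l.
Proof. induction l; simpl; intros H; [lra|]. rewrite H by auto. rewrite IHl; auto. Qed.

Lemma sum_nth_le {A} (f : A -> R) (z : A) l k :
  f z = 0 -> (forall x, In x l -> 0 <= f x) ->
  sum_f_R0 (fun n => f (nth n l z)) k <= lsum f l.
Proof.
  intros Hz. revert k. induction l as [|a l IH]; intros k H.
  - simpl. induction k; simpl; rewrite ?Hz; [lra|]. destruct k; simpl in *; rewrite ?Hz in *; lra.
  - destruct k.
    + simpl. assert (0 <= lsum f l) by (apply lsum_nonneg; auto with datatypes). lra.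
    + rewrite decomp_sum by lia. simpl lsum. simpl nth. simpl pred.
      assert (sum_f_R0 (fun i => f (nth i l z)) k <= lsum f l) by (apply IH; auto with datatypes).
      lra.
Qed.

Lemma sum_f_R0_concat {A} (f : A -> R) (G : nat -> list A) N :
  lsum f (concat (map G (seq 0 (S N)))) = sum_f_R0 (fun n => lsum f (G n)) N.
Proof.
  induction N.
  - simpl. rewrite app_nil_r. reflexivity.
  - rewrite seq_S, map_app, concat_app, lsum_app, IHN. simpl. rewrite app_nil_r. reflexivity.
Qed.

(* Geometric series used to split a tolerance eps among countably many pieces. *)
Lemma sum_geom_eps (e : R) k : 0 <= e -> sum_f_R0 (fun n => e * (/2)^(S n)) k <= e.
Proof.
  intros He. assert (H: sum_f_R0 (fun n => e * (/2)^(S n)) k = e * (1 - (/2)^(S k))).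
  { induction k; simpl in *; [lra|]. rewrite IHk. simpl. field. }
  rewrite H. assert (0 < (/2)^(S k)) by (apply pow_lt; lra). nra.
Qed.

Lemma Rabs_le_inv x r : Rabs x <= r -> - r <= x <= r.
Proof. unfold Rabs; destruct Rcase_abs; intros; lra. Qed.

Lemma Rabs_le_intro x r : - r <= x <= r -> Rabs x <= r.
Proof. unfold Rabs; destruct Rcase_abs; intros; lra. Qed.

(** * Words over the digit set and d-adic cylinders *)

(* The integer whose base-d digits are the word w (most significant first). *)
Definition wordval (d : nat) (w : list nat) : nat :=
  fold_left (fun acc e => (acc * d + e)%nat) w 0%nat.

Definition prefix (a : nat -> nat) (k : nat) : list nat := map a (seq 0 k).

Fixpoint decode (d k j : nat) : list nat :=
  match k with O => nil | S k' => decode d k' (j / d) ++ (j mod d :: nil) end.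

Fixpoint words (E : list nat) (v : list nat) (k : nat) : list (list nat) :=
  match k with
  | O => v :: nil
  | S k' => flat_map (fun w => map (fun e => w ++ e :: nil) E) (words E v k')
  end.

Definition dterm (d : nat) (a : nat -> nat) (i : nat) : R := INR (a i) / INR d ^ (S i).

Definition cyl_left (d n : nat) (w : list nat) : R := INR (wordval d w) / INR d ^ n.

Lemma wordval_snoc d w e : wordval d (w ++ e :: nil) = (wordval d w * d + e)%nat.
Proof. unfold wordval. rewrite fold_left_app. reflexivity. Qed.

Lemma wordval_app d u v : wordval d (u ++ v) = (wordval d u * d ^ length v + wordval d v)%nat.
Proof.
  induction v as [|e v IH] using rev_ind.
  - rewrite app_nil_r. simpl. unfold wordval at 3. simpl. lia.
  - rewrite app_assoc, !wordval_snoc, IH, length_app. simpl length. rewrite Nat.pow_add_r. simpl. nia.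
Qed.

Lemma wordval_lt d w : (forall e, In e w -> (e < d)%nat) -> (wordval d w < d ^ length w)%nat.
Proof.
  induction w as [|e w IH] using rev_ind; intros H; [unfold wordval; simpl; lia|].
  rewrite wordval_snoc, length_app. simpl length.
  assert (He : (e < d)%nat) by (apply H; apply in_or_app; simpl; auto).
  assert (Hw : (wordval d w < d ^ length w)%nat) by (apply IH; intros; apply H; apply in_or_app; auto).
  rewrite Nat.pow_add_r. simpl. rewrite Nat.mul_1_r. nia.
Qed.

Lemma decode_length d k j : length (decode d k j) = k.
Proof. revert j; induction k; intros; simpl; [reflexivity|]. rewrite length_app, IHk. simpl. lia. Qed.

Lemma decode_wordval d w : (1 <= d)%nat -> (forall e, In e w -> (e < d)%nat) ->
  decode d (length w) (wordval d w) = w.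
Proof.
  intros Hd. induction w as [|e w IH] using rev_ind; intros H; [reflexivity|].
  rewrite length_app, Nat.add_comm. simpl. rewrite wordval_snoc.
  assert (He : (e < d)%nat) by (apply H; apply in_or_app; simpl; auto).
  replace ((wordval d w * d + e) / d)%nat with (wordval d w).
  2:{ rewrite Nat.div_add_l by lia. rewrite Nat.div_small by lia. lia. }
  replace ((wordval d w * d + e) mod d)%nat with e.
  2:{ rewrite Nat.Div0.add_mod, Nat.Div0.mod_mul. simpl. rewrite Nat.Div0.mod_mod.
      rewrite Nat.mod_small; lia. }
  rewrite IH; auto. intros; apply H; apply in_or_app; auto.
Qed.

Lemma prefix_S a k : prefix a (S k) = prefix a k ++ a k :: nil.
Proof. unfold prefix. rewrite seq_S, map_app. reflexivity. Qed.

Lemma prefix_length a k : length (prefix a k) = k.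
Proof. unfold prefix. rewrite length_map, length_seq. reflexivity. Qed.

Lemma prefix_add a k j : prefix a (k + j) = prefix a k ++ map a (seq k j).
Proof. unfold prefix. rewrite seq_app, map_app. reflexivity. Qed.

Lemma firstn_prefix a j K : (j <= K)%nat -> firstn j (prefix a K) = prefix a j.
Proof.
  intros H. replace K with (j + (K - j))%nat by lia. rewrite prefix_add.
  rewrite firstn_app, prefix_length, Nat.sub_diag. simpl. rewrite app_nil_r.
  rewrite <- (prefix_length a j) at 1. apply firstn_all.
Qed.

Lemma partial_sum d a k : (0 < d)%nat ->
  sum_f_R0 (dterm d a) k = INR (wordval d (prefix a (S k))) / INR d ^ (S k).
Proof.
  intros Hd. assert (0 < INR d) by (apply lt_0_INR; lia).
  induction k.
  - reflexivity.
  - simpl sum_f_R0. rewrite IHk, (prefix_S a (S k)), wordval_snoc. unfold dterm.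
    rewrite plus_INR, mult_INR. simpl. field. split; [|lra]. apply pow_nonzero. lra.
Qed.

Lemma words_length E v k : length (words E v k) = (length E ^ k)%nat.
Proof.
  induction k; simpl; [reflexivity|].
  assert (G : forall l : list (list nat),
    length (flat_map (fun w => map (fun e => w ++ e :: nil) E) l) = (length l * length E)%nat).
  { induction l; simpl; [reflexivity|]. rewrite length_app, length_map, IHl. lia. }
  rewrite G, IHk. lia.
Qed.

Lemma cv_le_bound (u : nat -> R) l M n0 :
  Un_cv u l -> (forall n, (n >= n0)%nat -> u n <= M) -> l <= M.
Proof.
  intros Hu Hb. destruct (Rle_dec l M) as [|Hn]; auto. exfalso.
  destruct (Hu (l - M)) as [N HN]; [lra|].
  specialize (HN (Nat.max N n0) ltac:(lia)). specialize (Hb (Nat.max N n0) ltac:(lia)).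
  unfold R_dist in HN. apply Rabs_def2 in HN. lra.
Qed.

Lemma cv_ge_bound (u : nat -> R) l M n0 :
  Un_cv u l -> (forall n, (n >= n0)%nat -> M <= u n) -> M <= l.
Proof.
  intros Hu Hb. destruct (Rle_dec M l) as [|Hn]; auto. exfalso.
  destruct (Hu (M - l)) as [N HN]; [lra|].
  specialize (HN (Nat.max N n0) ltac:(lia)). specialize (Hb (Nat.max N n0) ltac:(lia)).
  unfold R_dist in HN. apply Rabs_def2 in HN. lra.
Qed.

Section Cylinders.
Variable d : nat.
Variable E : list nat.
Hypothesis hd : (2 <= d)%nat.
Hypothesis hE : forall e, In e E -> (e < d)%nat.

Definition digits (a : nat -> nat) := forall i, In (a i) E.

Lemma INR_d_gt1 : 1 < INR d.
Proof. apply (lt_INR 1); lia. Qed.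

Lemma pow_d_pos k : 0 < INR d ^ k.
Proof. apply pow_lt. pose proof INR_d_gt1. lra. Qed.

Lemma partial_sum_in_cylinder a k n : digits a -> (n >= k)%nat ->
  cyl_left d k (prefix a k) <= sum_f_R0 (dterm d a) n
    <= cyl_left d k (prefix a k) + / INR d ^ k.
Proof.
  intros Ha Hn. unfold cyl_left. rewrite partial_sum by lia.
  replace (S n) with (k + (S n - k))%nat by lia. rewrite prefix_add, wordval_app.
  set (j := (S n - k)%nat). set (T := wordval d (map a (seq k j))).
  assert (HT : (T < d ^ j)%nat).
  { unfold T. replace j with (length (map a (seq k j))) at 2
      by (rewrite length_map, length_seq; reflexivity).
    apply wordval_lt. intros e He. apply in_map_iff in He. destruct He as [i [<- _]]. apply hE, Ha. }
  rewrite length_map, length_seq. fold j. fold T.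
  rewrite plus_INR, mult_INR, pow_INR, pow_add.
  assert (HT' : INR T + 1 <= INR d ^ j) by (rewrite <- pow_INR, <- S_INR; apply le_INR; lia).
  pose proof (pos_INR T). pose proof (pow_d_pos j). pose proof (pow_d_pos k).
  set (N := INR (wordval d (prefix a k))) in *.
  replace ((N * INR d ^ j + INR T) / (INR d ^ k * INR d ^ j))
    with (N / INR d ^ k + (INR T / INR d ^ j) / INR d ^ k) by (field; lra).
  assert (0 <= INR T / INR d ^ j <= 1).
  { split; [apply Rmult_le_pos; [lra|apply Rlt_le, Rinv_0_lt_compat; lra]|].
    apply (Rmult_le_reg_r (INR d ^ j)); auto. unfold Rdiv. rewrite Rmult_assoc, Rinv_l by lra. lra. }
  assert (0 < / INR d ^ k) by (apply Rinv_0_lt_compat; lra). unfold Rdiv. nra.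
Qed.

Lemma value_in_cylinder a x k : digits a -> infinite_sum (dterm d a) x ->
  cyl_left d k (prefix a k) <= x <= cyl_left d k (prefix a k) + / INR d ^ k.
Proof.
  intros Ha Hx. split.
  - apply (cv_ge_bound _ _ _ k Hx). intros n Hn. apply (partial_sum_in_cylinder a k n Ha Hn).
  - apply (cv_le_bound _ _ _ k Hx). intros n Hn. apply (partial_sum_in_cylinder a k n Ha Hn).
Qed.

Lemma value_exists a : digits a -> exists x, infinite_sum (dterm d a) x.
Proof.
  intros Ha. apply Un_cv_crit.
  - intros n. simpl. unfold dterm. pose proof (pow_d_pos (S (S n))).
    pose proof (pos_INR (a (S n))).
    assert (0 <= INR (a (S n)) / INR d ^ S (S n))
      by (apply Rmult_le_pos; [lra|apply Rlt_le, Rinv_0_lt_compat; lra]).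
    lra.
  - exists 1. intros y [n ->].
    pose proof (partial_sum_in_cylinder a 0 n Ha ltac:(lia)) as Hb.
    unfold cyl_left in Hb. simpl in Hb. lra.
Qed.

Lemma prefix_in_words a n k : digits a -> In (prefix a (n + k)) (words E (prefix a n) k).
Proof.
  intros Ha. induction k.
  - rewrite Nat.add_0_r. simpl; auto.
  - simpl. rewrite Nat.add_succ_r, prefix_S. apply in_flat_map. exists (prefix a (n + k)).
    split; auto. apply (in_map (fun e => prefix a (n + k) ++ e :: nil)). apply Ha.
Qed.

End Cylinders.

(** * Outer measures from finite covers *)

Lemma sum_if_lt (c : R) (len k : nat) : 0 <= c ->
  sum_f_R0 (fun n => if Nat.ltb n len then c else 0) k <= INR len * c.
Proof.
  intros Hc.
  assert (H : sum_f_R0 (fun n => if Nat.ltb n len then c else 0) k = INR (Nat.min (S k) len) * c).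
  { induction k.
    - simpl. destruct len; simpl; [lra|]. destruct (Nat.ltb 0 (S len)) eqn:E; [lra|].
      apply Nat.ltb_ge in E; lia.
    - simpl sum_f_R0. rewrite IHk. destruct (Nat.ltb (S k) len) eqn:E.
      + apply Nat.ltb_lt in E. rewrite !Nat.min_l by lia. rewrite (S_INR (S k)). lra.
      + apply Nat.ltb_ge in E. rewrite !Nat.min_r by lia. lra. }
  rewrite H. apply Rmult_le_compat_r; auto. apply le_INR; lia.
Qed.

(* A finite cover by intervals of length ell bounds the Hausdorff outer measure;
   the remaining covering sets are empty, with radii of summable s-th powers. *)
Lemma haus_from_list s A r : 0 < s ->
  (forall eta, 0 < eta -> forall eps, 0 < eps -> exists (l : list R) (ell : R),
     0 < ell <= eta /\ (forall x, A x -> exists c, In c l /\ c <= x <= c + ell) /\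
     INR (length l) * Rpower ell s <= r + eps) -> haus_le s A r.
Proof.
  intros Hs H eta Heta eps Heps.
  destruct (H eta Heta (eps / 2) ltac:(lra)) as [l [ell [Hell [Hc Hsum]]]].
  set (len := length l) in *.
  set (tau := fun n => Rmin eta (Rpower (eps / 2 * (/2) ^ (S n)) (/ s))).
  assert (Htau : forall n, 0 < tau n)
    by (intros n; unfold tau; apply Rmin_glb_lt; auto; unfold Rpower; apply exp_pos).
  exists (fun n x => (n < len)%nat /\ nth n l 0 <= x <= nth n l 0 + ell).
  exists (fun n => if Nat.ltb n len then ell else tau n).
  split; [|split].
  - intros n. destruct (Nat.ltb n len) eqn:En.
    + split; [lra|]. intros x y [_ Hx] [_ Hy]. apply Rabs_le_intro. lra.
    + split; [split; [apply Htau|apply Rmin_l]|].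
      intros x y [Hn _]. apply Nat.ltb_ge in En. lia.
  - intros x Hx. destruct (Hc x Hx) as [c [Hcl Hcx]].
    destruct (In_nth l c 0 Hcl) as [n [Hn Hnth]]. exists n. rewrite Hnth. auto.
  - intros k.
    assert (Hb : forall n, Rpower (if Nat.ltb n len then ell else tau n) s <=
                 (if Nat.ltb n len then Rpower ell s else 0) + eps / 2 * (/2) ^ (S n)).
    { intros n. assert (0 < (/2) ^ (S n)) by (apply pow_lt; lra).
      destruct (Nat.ltb n len); [nra|].
      eapply Rle_trans; [apply Rle_Rpower_l; [lra|split; [apply Htau|apply Rmin_r]]|].
      rewrite Rpower_mult, Rinv_l, Rpower_1 by nra. lra. }
    eapply Rle_trans; [apply sum_Rle; intros n _; exact (Hb n)|].
    rewrite plus_sum.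
    assert (0 <= Rpower ell s) by (unfold Rpower; apply Rlt_le, exp_pos).
    pose proof (sum_if_lt (Rpower ell s) len k ltac:(lra)).
    pose proof (sum_geom_eps (eps / 2) k ltac:(lra)). lra.
Qed.

Lemma leb_from_list A r :
  (forall eps, 0 < eps -> exists l : list (R * R),
     (forall iv, In iv l -> fst iv <= snd iv) /\
     (forall x, A x -> exists iv, In iv l /\ fst iv <= x <= snd iv) /\
     lsum (fun iv => snd iv - fst iv) l <= r + eps) -> leb_le A r.
Proof.
  intros H eps Heps. destruct (H eps Heps) as [l [Hle [Hc Hs]]].
  exists (fun n => fst (nth n l (0, 0))), (fun n => snd (nth n l (0, 0))).
  split; [|split].
  - intros n. destruct (Nat.lt_ge_cases n (length l)).
    + apply Hle, nth_In; auto.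
    + rewrite nth_overflow by auto. simpl; lra.
  - intros x Hx. destruct (Hc x Hx) as [iv [Hiv Hx']].
    destruct (In_nth l iv (0,0) Hiv) as [n [Hn Hnth]]. exists n. rewrite Hnth. auto.
  - intros k. eapply Rle_trans; [|exact Hs].
    apply (sum_nth_le (fun iv => snd iv - fst iv) (0,0) l k); [simpl; lra|].
    intros x Hx. specialize (Hle x Hx). lra.
Qed.

Lemma leb_mono A B r r' : leb_le A r -> (forall x, B x -> A x) -> r <= r' -> leb_le B r'.
Proof.
  intros H HB Hr eps Heps. destruct (H eps Heps) as [c [e [H1 [H2 H3]]]].
  exists c, e. split; [auto|split]; [intros x Hx; apply H2, HB, Hx|intros k; specialize (H3 k); lra].
Qed.

Lemma haus_mono s A B r r' : haus_le s A r -> (forall x, B x -> A x) -> r <= r' -> haus_le s B r'.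
Proof.
  intros H HB Hr eta Heta eps Heps. destruct (H eta Heta eps Heps) as [U [rho [H1 [H2 H3]]]].
  exists U, rho. split; [auto|split]; [intros x Hx; apply H2, HB, Hx|intros k; specialize (H3 k); lra].
Qed.

Lemma leb_empty : leb_le (fun _ => False) 0.
Proof.
  apply leb_from_list. intros eps Heps. exists nil. simpl. split; [tauto|split; [tauto|lra]].
Qed.

Lemma haus_empty s A : 0 < s -> (forall x, ~ A x) -> haus_le s A 0.
Proof.
  intros Hs HA. apply haus_from_list; auto. intros eta Heta eps Heps. exists nil, eta.
  split; [lra|split]; [intros x Hx; exfalso; eapply HA; eauto|simpl; lra].
Qed.

Lemma leb_interval a b : a <= b -> leb_le (fun y => a <= y <= b) (b - a).
Proof.
  intros Hab. apply leb_from_list. intros eps Heps. exists ((a, b) :: nil). split; [|split].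
  - intros iv [<-|[]]; simpl; lra.
  - intros y Hy. exists (a, b); simpl; auto.
  - simpl. lra.
Qed.

Definition balls (l : list R) (r : R) : R -> Prop := fun y => exists c, In c l /\ Rabs (y - c) <= r.

Lemma leb_balls l r : 0 <= r -> leb_le (balls l r) (INR (length l) * (2 * r)).
Proof.
  intros Hr. apply leb_from_list. intros eps Heps. exists (map (fun c => (c - r, c + r)) l).
  split; [|split].
  - intros iv Hiv. apply in_map_iff in Hiv. destruct Hiv as [c [<- _]]. simpl. lra.
  - intros y [c [Hc Hy]]. exists (c - r, c + r). split; [apply (in_map (fun c => (c - r, c + r))); auto|].
    simpl. apply Rabs_le_inv in Hy. lra.
  - rewrite lsum_map. simpl. rewrite (lsum_ext _ (fun _ => 2 * r)) by (intros; ring).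
    rewrite lsum_const. lra.
Qed.

(** * Measures of J and of its cylinders *)

Lemma small_pow x c : 0 <= x < 1 -> 0 < c -> exists m, x ^ m < c.
Proof.
  intros Hx Hc. destruct (pow_lt_1_zero x ltac:(rewrite Rabs_pos_eq; lra) c Hc) as [m Hm].
  exists m. specialize (Hm m (le_n m)). rewrite Rabs_pos_eq in Hm; auto. apply pow_le; lra.
Qed.

Lemma Rpower_inv_pow x k s : 0 < x -> Rpower (/ x ^ k) s = / (Rpower x s) ^ k.
Proof.
  intros Hx. rewrite <- (Rpower_pow k x) by auto. rewrite <- Rpower_Ropp.
  rewrite <- (Rpower_pow k (Rpower x s)) by (unfold Rpower; apply exp_pos).
  rewrite !Rpower_mult. rewrite <- Rpower_Ropp. f_equal. ring.
Qed.

Section MeasureOfJ.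
Variable d : nat.
Variable E : list nat.
Hypothesis hd : (2 <= d)%nat.
Hypothesis hE : forall e, In e E -> (e < d)%nat.

Definition cylinder (n : nat) (v : list nat) (x : R) : Prop :=
  exists a, digits E a /\ infinite_sum (dterm d a) x /\ prefix a n = v.

Lemma cylinder_interval n v x : cylinder n v x -> cyl_left d n v <= x <= cyl_left d n v + / INR d ^ n.
Proof. intros [a [Ha [Hx <-]]]. apply (value_in_cylinder d E hd hE a x n Ha Hx). Qed.

Lemma J_in_cylinder m x : digitJ d E x -> exists w, In w (words E nil m) /\ cylinder m w x.
Proof.
  intros [a [Ha Hx]]. exists (prefix a m). split.
  - apply (prefix_in_words E a 0 m Ha).
  - exists a; auto.
Qed.

Lemma leb_J m : leb_le (digitJ d E) (INR (length E ^ m) * / INR d ^ m).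
Proof.
  pose proof (pow_d_pos d hd m).
  apply leb_from_list. intros eps Heps.
  exists (map (fun w => (cyl_left d m w, cyl_left d m w + / INR d ^ m)) (words E nil m)).
  split; [|split].
  - intros iv Hiv. apply in_map_iff in Hiv. destruct Hiv as [w [<- _]]. simpl.
    assert (0 < / INR d ^ m) by (apply Rinv_0_lt_compat; lra). lra.
  - intros x Hx. destruct (J_in_cylinder m x Hx) as [w [Hw Hc]].
    exists (cyl_left d m w, cyl_left d m w + / INR d ^ m).
    split; [apply (in_map (fun w => (cyl_left d m w, cyl_left d m w + / INR d ^ m))); auto|].
    simpl. apply cylinder_interval; auto.
  - rewrite lsum_map. simpl. rewrite (lsum_ext _ (fun _ => / INR d ^ m)) by (intros; ring).
    rewrite lsum_const, words_length. lra.
Qed.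

Lemma eventually_small_inv c : 0 < c -> exists K, / INR d ^ K < c.
Proof.
  intros Hc. pose proof (INR_d_gt1 d hd).
  destruct (small_pow (/ INR d) c) as [K HK]; auto.
  - split; [apply Rlt_le, Rinv_0_lt_compat; lra|]. rewrite <- Rinv_1. apply Rinv_lt_contravar; lra.
  - exists K. rewrite <- pow_inv. auto.
Qed.

Lemma ratio_small (hpd : (length E < d)%nat) c : 0 < c ->
  exists m, INR (length E ^ m) * / INR d ^ m < c.
Proof.
  intros Hc. pose proof (INR_d_gt1 d hd).
  destruct (small_pow (INR (length E) / INR d) c) as [m Hm]; auto.
  - split; [apply Rmult_le_pos; [apply pos_INR|apply Rlt_le, Rinv_0_lt_compat; lra]|].
    apply (Rmult_lt_reg_r (INR d)); [lra|]. unfold Rdiv.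
    rewrite Rmult_assoc, Rinv_l, Rmult_1_l, Rmult_1_r by lra. apply lt_INR; auto.
  - exists m. rewrite pow_INR, <- pow_inv, <- Rpow_mult_distr. auto.
Qed.

(* If p <= d^delta, a level-n cylinder has H^delta-mass at most d^(-n delta):
   cover it by its p^K subcylinders of level n + K. *)
Lemma haus_cylinder delta (hdelta : 0 < delta) (hD : INR (length E) <= Rpower (INR d) delta) n v :
  haus_le delta (fun x => cylinder n v x /\ digitJ d E x) (/ Rpower (INR d) delta ^ n).
Proof.
  pose proof (INR_d_gt1 d hd) as Hdp.
  set (D := Rpower (INR d) delta) in *.
  assert (HD0 : 0 < D) by (unfold D, Rpower; apply exp_pos).
  apply haus_from_list; auto. intros eta Heta eps Heps.
  destruct (eventually_small_inv eta Heta) as [K HK].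
  exists (map (cyl_left d (n + K)) (words E v K)), (/ INR d ^ (n + K)). split; [|split].
  - split; [apply Rinv_0_lt_compat, pow_lt; lra|]. eapply Rle_trans; [|apply Rlt_le, HK].
    apply Rinv_le_contravar; [apply pow_lt; lra|]. apply Rle_pow; [lra|lia].
  - intros x [[a [Ha [Hx Hv]]] _]. exists (cyl_left d (n + K) (prefix a (n + K))). split.
    + apply in_map. rewrite <- Hv. apply prefix_in_words; auto.
    + apply cylinder_interval. exists a; auto.
  - rewrite length_map, words_length, Rpower_inv_pow by lra. fold D.
    rewrite pow_INR, pow_add, Rinv_mult.
    assert (INR (length E) ^ K <= D ^ K) by (apply pow_incr; split; [apply pos_INR|auto]).
    assert (0 < D ^ K) by (apply pow_lt; auto).
    assert (0 < / D ^ n) by (apply Rinv_0_lt_compat, pow_lt; auto).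
    assert (INR (length E) ^ K * / D ^ K <= 1).
    { apply (Rmult_le_reg_r (D ^ K)); auto. rewrite Rmult_assoc, Rinv_l by lra. lra. }
    replace (INR (length E) ^ K * (/ D ^ n * / D ^ K))
      with (/ D ^ n * (INR (length E) ^ K * / D ^ K)) by ring.
    nra.
Qed.

End MeasureOfJ.

(** * The uniform mass distribution on E^N *)

Definition ind (v w : list nat) : R :=
  if list_eq_dec Nat.eq_dec (firstn (length v) w) v then 1 else 0.

Lemma ind_01 v w : 0 <= ind v w <= 1.
Proof. unfold ind; destruct list_eq_dec; lra. Qed.

Lemma ind_self v : ind v v = 1.
Proof. unfold ind. rewrite firstn_all. destruct list_eq_dec; congruence. Qed.

Lemma ind_nil w : ind nil w = 1.
Proof. unfold ind. destruct list_eq_dec as [_|Hne]; [reflexivity|now destruct Hne]. Qed.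

Lemma ind_snoc v w e :
  ind (v ++ e :: nil) w <= (if Nat.eq_dec e (nth (length v) w 0%nat) then 1 else 0) * ind v w.
Proof.
  unfold ind at 1. destruct list_eq_dec as [Heq|Hne];
    [|destruct Nat.eq_dec; pose proof (ind_01 v w); lra].
  rewrite length_app in Heq. simpl length in Heq.
  assert (H1 : firstn (length v) w = v).
  { assert (H := f_equal (firstn (length v)) Heq). rewrite firstn_firstn, Nat.min_l in H by lia.
    rewrite H, firstn_app, Nat.sub_diag. simpl. rewrite app_nil_r. apply firstn_all. }
  assert (H2 : nth (length v) w 0%nat = e).
  { assert (H := f_equal (fun l => nth (length v) l 0%nat) Heq). simpl in H.
    rewrite nth_firstn in H. replace (Nat.ltb (length v) (length v + 1)) with true in H
      by (symmetry; apply Nat.ltb_lt; lia).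
    rewrite H, app_nth2, Nat.sub_diag by lia. reflexivity. }
  destruct Nat.eq_dec; [|congruence]. unfold ind. destruct list_eq_dec; [lra|congruence].
Qed.

Lemma lsum_indicator_le1 (E : list nat) c : NoDup E ->
  lsum (fun e => if Nat.eq_dec e c then 1 else 0) E <= 1.
Proof.
  induction E as [|a E IH]; intros Hn; simpl; [lra|].
  inversion Hn; subst. destruct (Nat.eq_dec a c); [|specialize (IH H2); lra].
  subst. enough (lsum (fun e => if Nat.eq_dec e c then 1 else 0) E = 0) by lra.
  clear -H1. induction E as [|b E IH]; simpl; [lra|].
  destruct (Nat.eq_dec b c); [subst; exfalso; apply H1; simpl; auto|].
  rewrite IH; [lra|]. intro; apply H1; simpl; auto.
Qed.

(* A word w has at most one child of v as a prefix. *)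
Lemma ind_children (E : list nat) v w : NoDup E ->
  lsum (fun e => ind (v ++ e :: nil) w) E <= ind v w.
Proof.
  intros Hnd. eapply Rle_trans; [apply lsum_le; intros e _; apply ind_snoc|].
  rewrite (lsum_ext _ (fun e => ind v w * (if Nat.eq_dec e (nth (length v) w 0%nat) then 1 else 0)))
    by (intros; ring).
  rewrite lsum_scal. pose proof (lsum_indicator_le1 E (nth (length v) w 0%nat) Hnd).
  pose proof (ind_01 v w). nra.
Qed.

Section MassDistribution.
Variable E : list nat.
Hypothesis hnd : NoDup E.
Variable e0 : nat.
Hypothesis he0 : In e0 E.
Variable Lw : list (list nat).

Let p := INR (length E).
Lemma p_pos : 0 < p.
Proof. unfold p. apply (lt_INR 0). destruct E; [contradiction|simpl; lia]. Qed.

Definition mass (w : list nat) : R := (/p) ^ length w.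

Lemma mass_pos w : 0 < mass w.
Proof. unfold mass. apply pow_lt, Rinv_0_lt_compat, p_pos. Qed.

Lemma mass_snoc v e : mass (v ++ e :: nil) = mass v * / p.
Proof. unfold mass. rewrite length_app, pow_add. simpl. ring. Qed.

Definition covered (v : list nat) := forall a, digits E a -> prefix a (length v) = v ->
  exists w, In w Lw /\ prefix a (length w) = w.

Lemma extend_word v : (forall e, In e v -> In e E) ->
  exists a, digits E a /\ prefix a (length v) = v.
Proof.
  intros Hv. exists (fun i => nth i v e0). split.
  - intros i. destruct (Nat.lt_ge_cases i (length v)); [apply Hv, nth_In; auto|].
    rewrite nth_overflow; auto.
  - unfold prefix. apply nth_ext with (d := e0) (d' := e0); rewrite length_map, length_seq; auto.
    intros n Hn. rewrite (nth_indep _ e0 (nth 0%nat v e0)) by (rewrite length_map, length_seq; auto).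
    rewrite (map_nth (fun i => nth i v e0) (seq 0 (length v)) 0%nat n), seq_nth; auto.
Qed.

Lemma covered_snoc v e : covered v -> covered (v ++ e :: nil).
Proof.
  intros Hc a Ha Hav. apply Hc; auto. rewrite length_app in Hav. simpl in Hav.
  rewrite <- (firstn_prefix a (length v) (length v + 1)), Hav by lia.
  rewrite firstn_app, Nat.sub_diag. simpl. rewrite app_nil_r. apply firstn_all.
Qed.

Definition mass_below (v : list nat) : R := lsum (fun w => ind v w * mass w) Lw.

Lemma child_mass v e :
  ~ (exists w, In w Lw /\ firstn (length w) v = w) ->
  (exists w, In w Lw /\ firstn (length w) (v ++ e :: nil) = w) ->
  mass (v ++ e :: nil) <= mass_below (v ++ e :: nil).
Proof.
  intros Hn [w [Hw Hwv]].
  assert (Hlen : (length w > length v)%nat).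
  { destruct (Nat.le_gt_cases (length w) (length v)); auto. exfalso. apply Hn. exists w.
    rewrite firstn_app, (proj2 (Nat.sub_0_le (length w) (length v))) in Hwv by auto.
    simpl in Hwv. rewrite app_nil_r in Hwv. auto. }
  rewrite firstn_all2 in Hwv by (rewrite length_app; simpl; lia). subst w.
  eapply Rle_trans; [|apply (lsum_mem (fun w => ind (v ++ e :: nil) w * mass w) Lw (v ++ e :: nil)); auto].
  - rewrite ind_self. lra.
  - intros y _. pose proof (ind_01 (v ++ e :: nil) y). pose proof (mass_pos y). nra.
Qed.

Lemma parent_mass v :
  (forall e, In e E -> mass (v ++ e :: nil) <= mass_below (v ++ e :: nil)) ->
  mass v <= mass_below v.
Proof.
  intros Hch.
  assert (H1 : mass v = lsum (fun e => mass (v ++ e :: nil)) E).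
  { rewrite (lsum_ext _ (fun _ => mass v * / p)) by (intros; apply mass_snoc).
    rewrite lsum_const. fold p. field. pose proof p_pos; lra. }
  rewrite H1. eapply Rle_trans; [apply lsum_le; exact Hch|].
  unfold mass_below. rewrite lsum_swap. apply lsum_le. intros w _.
  rewrite (lsum_ext _ (fun e => mass w * ind (v ++ e :: nil) w)) by (intros; ring).
  rewrite lsum_scal. pose proof (ind_children E v w hnd). pose proof (mass_pos w). nra.
Qed.

(* Induction on the height above the longest covering word: a covered word either
   extends a covering word or has mass at most that of the covering words below it. *)
Lemma mass_claim B : (forall w, In w Lw -> (length w <= B)%nat) ->
  forall m v, (B - length v <= m)%nat -> (forall e, In e v -> In e E) -> covered v ->
  (exists w, In w Lw /\ firstn (length w) v = w) \/ mass v <= mass_below v.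
Proof.
  intros HB. induction m; intros v Hm Hv Hc.
  - left. destruct (extend_word v Hv) as [a [Ha Hav]].
    destruct (Hc a Ha Hav) as [w [Hw Haw]]. exists w; split; auto.
    rewrite <- Hav, firstn_prefix; auto. specialize (HB w Hw). lia.
  - destruct (classic (exists w, In w Lw /\ firstn (length w) v = w)) as [Hy|Hn]; [left; auto|right].
    apply parent_mass. intros e He.
    assert (Hv' : forall x, In x (v ++ e :: nil) -> In x E)
      by (intros x Hx; apply in_app_or in Hx; destruct Hx as [Hx|[<-|[]]]; auto).
    destruct (IHm (v ++ e :: nil) ltac:(rewrite length_app; simpl; lia) Hv' (covered_snoc v e Hc))
      as [Hw|Hle]; auto.
    apply child_mass; auto.
Qed.

Lemma covering_mass : covered nil -> 1 <= lsum mass Lw.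
Proof.
  intros Hc.
  set (B := fold_right (fun w acc => Nat.max (length w) acc) 0%nat Lw).
  assert (HB : forall w, In w Lw -> (length w <= B)%nat).
  { unfold B. clear. induction Lw as [|a L IH]; simpl; [tauto|]. intros w [<-|Hw]; [lia|].
    specialize (IH w Hw). lia. }
  replace 1 with (mass nil) by reflexivity.
  destruct (mass_claim B HB B nil ltac:(simpl; lia) ltac:(simpl; tauto) Hc) as [[w [Hw Hwv]]|Hle].
  - rewrite firstn_nil in Hwv. subst w. apply lsum_mem; auto. intros; apply Rlt_le, mass_pos.
  - eapply Rle_trans; [exact Hle|]. right. apply lsum_ext. intros w _. rewrite ind_nil. ring.
Qed.

End MassDistribution.

(** * The fan theorem for E^N *)

Lemma finite_max (P : nat -> nat -> Prop) (l : list nat) :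
  (forall N N' e, P N e -> (N <= N')%nat -> P N' e) -> (forall e, In e l -> exists N, P N e) ->
  exists N, forall e, In e l -> P N e.
Proof.
  intros Hm. induction l as [|a l IH]; intros H; [exists 0%nat; simpl; tauto|].
  destruct (H a (or_introl eq_refl)) as [Na HNa].
  destruct IH as [Nl HNl]; [intros; apply H; simpl; auto|].
  exists (Nat.max Na Nl). intros e [<-|He]; [apply (Hm Na)|apply (Hm Nl)]; auto; lia.
Qed.

Section Fan.
Variable E : list nat.
Variable k : nat -> nat.
Variable Bar : nat -> list nat -> Prop.

Definition barred_by (N : nat) (v : list nat) := forall a, digits E a -> prefix a (length v) = v ->
  exists n, (n <= N)%nat /\ Bar n (prefix a (k n)).

Lemma unbarred_child v : (forall N, ~ barred_by N v) ->
  exists e, In e E /\ forall N, ~ barred_by N (v ++ e :: nil).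
Proof.
  intros Hv. apply NNPP. intro Hne.
  destruct (finite_max (fun N e => barred_by N (v ++ e :: nil)) E) as [N HN].
  - intros N N' e Hc HNN a Ha Hav. destruct (Hc a Ha Hav) as [n [Hn Hin]]. exists n; split; [lia|auto].
  - intros e He. apply NNPP. intro Hn. apply Hne. exists e. split; auto.
    intros N HN. apply Hn. exists N; auto.
  - apply (Hv N). intros a Ha Hav. apply (HN (a (length v)) (Ha _) a Ha).
    rewrite length_app. simpl. rewrite Nat.add_1_r, prefix_S, Hav. reflexivity.
Qed.

Lemma fan_theorem : (forall a, digits E a -> exists n, Bar n (prefix a (k n))) ->
  exists N, barred_by N nil.
Proof.
  intros Hbar. apply NNPP. intro Hno.
  assert (H0 : forall N, ~ barred_by N nil) by (intros N HN; apply Hno; eauto).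
  set (sel := fun v => epsilon (inhabits 0%nat)
                (fun e => In e E /\ forall N, ~ barred_by N (v ++ e :: nil))).
  set (branch := fix branch i := match i with O => nil | S i' => branch i' ++ sel (branch i') :: nil end).
  assert (Hinv : forall i N, ~ barred_by N (branch i)).
  { induction i; [exact H0|]. simpl.
    apply (proj2 (epsilon_spec (inhabits 0%nat) _ (unbarred_child _ IHi))). }
  set (a := fun i => sel (branch i)).
  assert (Ha : digits E a)
    by (intros i; apply (proj1 (epsilon_spec (inhabits 0%nat) _ (unbarred_child _ (Hinv i))))).
  assert (Hpa : forall i, prefix a i = branch i)
    by (induction i; [reflexivity|rewrite prefix_S, IHi; reflexivity]).
  destruct (Hbar a Ha) as [n Hn].
  apply (Hinv (k n) n). intros a' Ha' Hav. exists n. split; auto.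
  rewrite <- Hpa, prefix_length in Hav. rewrite Hav. auto.
Qed.

End Fan.

(** * The Hausdorff dimension of J is at least log p / log d *)

Lemma level_exists d rho : (2 <= d)%nat -> 0 < rho <= 1 ->
  exists k, / INR d ^ (S k) < rho /\ rho <= / INR d ^ k.
Proof.
  intros Hd Hr. pose proof (INR_d_gt1 d Hd) as Hdp.
  assert (Hi1 : / INR d < 1) by (rewrite <- Rinv_1; apply Rinv_lt_contravar; lra).
  destruct (small_pow (/ INR d) rho) as [K HK]; [split; [apply Rlt_le, Rinv_0_lt_compat|]; lra|lra|].
  rewrite pow_inv in HK. clear -HK Hr Hdp.
  induction K.
  - simpl in HK. rewrite Rinv_1 in HK. lra.
  - destruct (Rle_lt_dec rho (/ INR d ^ K)); [exists K; auto|apply IHK; auto].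
Qed.

Definition five (N : nat) : list nat := ((N - 2) :: (N - 1) :: N :: (N + 1) :: (N + 2) :: nil)%nat.

Section Dimension.
Variable d : nat.
Variable E : list nat.
Hypothesis hd : (2 <= d)%nat.
Hypothesis hE : forall e, In e E -> (e < d)%nat.
Hypothesis hnd : NoDup E.
Hypothesis hp1 : (1 < length E)%nat.

Lemma few_cylinders (U : R -> Prop) rho k : diam_le U rho -> rho <= / INR d ^ k ->
  exists N0, forall a x, digits E a -> infinite_sum (dterm d a) x -> U x ->
    In (prefix a k) (map (decode d k) (five N0)).
Proof.
  intros Hdiam Hrho.
  destruct (classic (exists a x, digits E a /\ infinite_sum (dterm d a) x /\ U x))
    as [[a' [x' [Ha' [Hx' HU']]]]|Hno];
    [|exists 0%nat; intros a x Ha Hx HU; exfalso; apply Hno; eauto].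
  exists (wordval d (prefix a' k)). intros a x Ha Hx HU.
  pose proof (value_in_cylinder d E hd hE a x k Ha Hx) as Ix.
  pose proof (value_in_cylinder d E hd hE a' x' k Ha' Hx') as Ix'.
  specialize (Hdiam x x' HU HU'). apply Rabs_le_inv in Hdiam.
  unfold cyl_left, Rdiv in Ix, Ix'. set (q := / INR d ^ k) in *.
  assert (Hq : 0 < q) by (apply Rinv_0_lt_compat, pow_d_pos; auto).
  set (N := wordval d (prefix a k)) in *. set (N' := wordval d (prefix a' k)) in *.
  assert (A1 : INR N <= INR (N' + 2)) by (rewrite plus_INR; simpl; apply (Rmult_le_reg_r q); nra).
  assert (A2 : INR N' <= INR (N + 2)) by (rewrite plus_INR; simpl; apply (Rmult_le_reg_r q); nra).
  apply INR_le in A1. apply INR_le in A2.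
  replace (prefix a k) with (decode d k N).
  - apply in_map. simpl. lia.
  - unfold N. rewrite <- (prefix_length a k) at 1. apply decode_wordval; [lia|].
    intros e He. unfold prefix in He. apply in_map_iff in He. destruct He as [i [<- _]]. apply hE, Ha.
Qed.

Lemma level_mass s rho k : 0 < s -> Rpower (INR d) s <= INR (length E) ->
  / INR d ^ (S k) < rho -> (/ INR (length E)) ^ k <= Rpower (INR d) s * Rpower rho s.
Proof.
  intros Hs HDs Hk. pose proof (INR_d_gt1 d hd) as Hdp.
  set (Ds := Rpower (INR d) s) in *.
  assert (HDs0 : 0 < Ds) by (unfold Ds, Rpower; apply exp_pos).
  assert (Hk0 : 0 < / INR d ^ S k) by (apply Rinv_0_lt_compat, pow_d_pos; auto).
  apply Rle_trans with (/ Ds ^ k).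
  { rewrite pow_inv. apply Rinv_le_contravar; [apply pow_lt; lra|]. apply pow_incr. lra. }
  apply Rle_trans with (Ds * Rpower (/ INR d ^ S k) s).
  - unfold Ds. rewrite Rpower_inv_pow by lra. simpl. rewrite Rinv_mult.
    fold Ds. right. field. split; [apply pow_nonzero|]; lra.
  - apply Rmult_le_compat_l; [lra|]. apply Rle_Rpower_l; lra.
Qed.

(* If d^s <= p then H^s(J) > 0: a cover of small s-mass would, by compactness,
   give finitely many cylinders covering E^N with total uniform mass < 1. *)
Lemma dim_lower (s : R) : 0 < s -> Rpower (INR d) s <= INR (length E) -> ~ haus_le s (digitJ d E) 0.
Proof.
  intros Hs HDs H.
  set (Ds := Rpower (INR d) s) in *.
  assert (HDs0 : 0 < Ds) by (unfold Ds, Rpower; apply exp_pos).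
  destruct (H 1 Rlt_0_1 (/ (10 * Ds)) ltac:(apply Rinv_0_lt_compat; lra)) as [U [rho [Hr [Hcov Hsum]]]].
  destruct (choice (fun n k => / INR d ^ (S k) < rho n /\ rho n <= / INR d ^ k)) as [k Hk];
    [intros n; apply level_exists; auto; apply Hr|].
  destruct (choice (fun n N0 => forall a x, digits E a -> infinite_sum (dterm d a) x -> U n x ->
      In (prefix a (k n)) (map (decode d (k n)) (five N0)))) as [N0 HN0];
    [intros n; apply (few_cylinders (U n) (rho n)); [apply Hr|apply Hk]|].
  set (M := fun n => map (decode d (k n)) (five (N0 n))).
  destruct (fan_theorem E k (fun n w => In w (M n))) as [N HN].
  { intros a Ha. destruct (value_exists d E hd hE a Ha) as [x Hx].
    destruct (Hcov x (ex_intro _ a (conj Ha Hx))) as [n Hn]. exists n. apply (HN0 n a x); auto. }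
  assert (He0 : exists e0, In e0 E) by (destruct E as [|e0 E']; [simpl in hp1; lia|exists e0; left; auto]).
  destruct He0 as [e0 He0].
  assert (Hcover : covered E (concat (map M (seq 0 (S N)))) nil).
  { intros a Ha _. destruct (HN a Ha eq_refl) as [n [Hn Hin]].
    exists (prefix a (k n)). split; [|rewrite prefix_length; reflexivity].
    apply in_concat. exists (M n). split; auto. apply in_map, in_seq. lia. }
  pose proof (covering_mass E hnd e0 He0 _ Hcover) as Hmass. rewrite sum_f_R0_concat in Hmass.
  assert (Hb : forall n, lsum (mass E) (M n) <= 5 * Ds * Rpower (rho n) s).
  { intros n. unfold M, mass. rewrite lsum_map.
    rewrite (lsum_ext _ (fun _ => (/ INR (length E)) ^ k n))
      by (intros; rewrite decode_length; auto).
    rewrite lsum_const. simpl length. replace (INR 5) with 5 by (simpl; lra).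
    rewrite Rmult_assoc. apply Rmult_le_compat_l; [lra|]. apply level_mass; auto. apply Hk. }
  assert (Hsc : forall K, sum_f_R0 (fun n => 5 * Ds * Rpower (rho n) s) K
                = 5 * Ds * sum_f_R0 (fun n => Rpower (rho n) s) K)
    by (induction K; simpl; [ring|rewrite IHK; ring]).
  assert (1 <= 5 * Ds * sum_f_R0 (fun n => Rpower (rho n) s) N)
    by (rewrite <- Hsc; eapply Rle_trans; [apply Hmass|apply sum_Rle; intros n _; apply Hb]).
  assert (5 * Ds * sum_f_R0 (fun n => Rpower (rho n) s) N <= 5 * Ds * (0 + / (10 * Ds)))
    by (apply Rmult_le_compat_l; [lra|apply Hsum]).
  assert (5 * Ds * (0 + / (10 * Ds)) = / 2) by (field; lra).
  lra.
Qed.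

End Dimension.

Lemma dim_ge d E delta : (2 <= d)%nat -> (forall e, In e E -> (e < d)%nat) -> NoDup E ->
  (1 < length E)%nat -> hausdorff_dim (digitJ d E) delta ->
  INR (length E) <= Rpower (INR d) delta /\ 0 < delta.
Proof.
  intros hd hE hnd hp1 [H0 [H1 _]].
  pose proof (INR_d_gt1 d hd) as Hdp.
  assert (Hp : 1 < INR (length E)) by (apply (lt_INR 1); lia).
  assert (Hld : 0 < ln (INR d)) by (rewrite <- ln_1; apply ln_increasing; lra).
  assert (Hlp : 0 < ln (INR (length E))) by (rewrite <- ln_1; apply ln_increasing; lra).
  set (s0 := ln (INR (length E)) / ln (INR d)).
  assert (Hs0 : Rpower (INR d) s0 = INR (length E)).
  { unfold Rpower, s0. replace (ln (INR (length E)) / ln (INR d) * ln (INR d))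
      with (ln (INR (length E))) by (field; lra). apply exp_ln; lra. }
  assert (Hs0p : 0 < s0) by (unfold s0; apply Rmult_lt_0_compat; auto; apply Rinv_0_lt_compat; auto).
  destruct (Rlt_le_dec delta s0) as [Hlt|Hge].
  - exfalso. set (s := (delta + s0) / 2).
    apply (dim_lower d E hd hE hnd hp1 s); [unfold s; lra| |apply H1; unfold s; lra].
    rewrite <- Hs0. apply Rlt_le, Rpower_lt; auto. unfold s; lra.
  - rewrite <- Hs0. split; [apply Rle_Rpower|]; lra.
Qed.

(** * Product-null sets *)

(* A rectangle A x B together with bounds a, b on the outer measures of its sides. *)
Record rect := Rect { rA : R -> Prop; rB : R -> Prop; ra : R; rb : R }.

Definition rval (r : rect) : R := ra r * rb r.

Definition rect0 : rect := Rect (fun _ => False) (fun _ => False) 0 0.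

Definition rvalid (m1 m2 : set_meas_le) (r : rect) :=
  0 <= ra r /\ 0 <= rb r /\ m1 (rA r) (ra r) /\ m2 (rB r) (rb r).

Definition comp_null (m1 m2 : set_meas_le) (S : R -> R -> Prop) :=
  forall e, 0 < e -> exists l : list rect, (forall r, In r l -> rvalid m1 m2 r) /\
    lsum rval l <= e /\ (forall x y, S x y -> exists r, In r l /\ rA r x /\ rB r y).

(* The n-th entry of the concatenation F k ++ F (k+1) ++ ..., computed with fuel f. *)
Fixpoint flat_at (F : nat -> list rect) (f k n : nat) : rect :=
  match f with
  | O => rect0
  | S f' => if Nat.ltb n (length (F k)) then nth n (F k) rect0 else flat_at F f' (S k) (n - length (F k))
  end.

Lemma flat_at_concat (F : nat -> list rect) : (forall k, (1 <= length (F k))%nat) ->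
  forall c k0 n f, (n < length (concat (map F (seq k0 c))))%nat -> (n < f)%nat ->
  flat_at F f k0 n = nth n (concat (map F (seq k0 c))) rect0.
Proof.
  intros HF. induction c; intros k0 n f Hn Hf; [simpl in Hn; lia|].
  destruct f; [lia|]. simpl. destruct (Nat.ltb n (length (F k0))) eqn:E.
  - apply Nat.ltb_lt in E. rewrite app_nth1; auto.
  - apply Nat.ltb_ge in E. rewrite app_nth2 by auto. apply IHc; [|specialize (HF k0); lia].
    simpl in Hn. rewrite length_app in Hn. lia.
Qed.

Lemma flat_at_in (F : nat -> list rect) f k n : flat_at F f k n = rect0 \/ exists k', In (flat_at F f k n) (F k').
Proof.
  revert k n. induction f; intros k n; simpl; [auto|].
  destruct (Nat.ltb n (length (F k))) eqn:E; [|apply IHf].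
  right. exists k. apply nth_In. apply Nat.ltb_lt; auto.
Qed.

Lemma concat_length_ge (F : nat -> list rect) : (forall k, (1 <= length (F k))%nat) ->
  forall c k0, (c <= length (concat (map F (seq k0 c))))%nat.
Proof.
  intros HF. induction c; intros k0; simpl; [lia|]. rewrite length_app.
  specialize (IHc (S k0)). specialize (HF k0). lia.
Qed.

(* Countably many finite families of rectangles, with summable masses, can be
   enumerated as a single sequence, as required by prod_null. *)
Lemma prod_null_lists m1 m2 N :
  m1 (fun _ => False) 0 -> m2 (fun _ => False) 0 ->
  (forall eps, 0 < eps -> exists F : nat -> list rect,
     (forall k r, In r (F k) -> rvalid m1 m2 r) /\
     (forall x y, N x y -> exists k r, In r (F k) /\ rA r x /\ rB r y) /\
     (forall k, sum_f_R0 (fun i => lsum rval (F i)) k <= eps)) ->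
  prod_null m1 m2 N.
Proof.
  intros H1 H2 H eps Heps. destruct (H eps Heps) as [F [Hv [Hc Hs]]].
  set (F' := fun k => F k ++ rect0 :: nil).
  assert (HF' : forall k, (1 <= length (F' k))%nat) by (intros; unfold F'; rewrite length_app; simpl; lia).
  set (el := fun n => flat_at F' (S n) 0 n).
  assert (Hv' : forall k r, In r (F' k) -> rvalid m1 m2 r).
  { intros k r Hr. unfold F' in Hr. apply in_app_or in Hr. destruct Hr as [Hr|[<-|[]]]; eauto.
    unfold rvalid; simpl; repeat split; auto; lra. }
  exists (fun n => rA (el n)), (fun n => rB (el n)), (fun n => ra (el n)), (fun n => rb (el n)).
  split; [|split].
  - intros n. destruct (flat_at_in F' (S n) 0 n) as [He|[k' Hk]].
    + unfold el; rewrite He. unfold rvalid; simpl; repeat split; auto; lra.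
    + apply (Hv' k'); auto.
  - intros x y Hxy. destruct (Hc x y Hxy) as [k [r [Hr [Hx Hy]]]].
    assert (Hin : In r (concat (map F' (seq 0 (S k))))).
    { apply in_concat. exists (F' k). split; [apply in_map, in_seq; lia|]. unfold F'; apply in_or_app; auto. }
    destruct (In_nth _ r rect0 Hin) as [n [Hn Hnth]].
    exists n. unfold el. rewrite (flat_at_concat F' HF' (S k) 0 n (S n)) by (auto; lia). rewrite Hnth. auto.
  - intros K. set (Lall := concat (map F' (seq 0 (S K)))).
    pose proof (concat_length_ge F' HF' (S K) 0).
    rewrite (sum_eq _ (fun n => rval (nth n Lall rect0))).
    2:{ intros i Hi. unfold el, rval. rewrite (flat_at_concat F' HF' (S K) 0 i (S i)) by lia. reflexivity. }
    eapply Rle_trans; [apply (sum_nth_le rval rect0 Lall K); [unfold rval; simpl; lra|]|].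
    { intros r Hr. unfold Lall in Hr. apply in_concat in Hr. destruct Hr as [l [Hl Hr]].
      apply in_map_iff in Hl. destruct Hl as [k [<- _]]. destruct (Hv' k r Hr) as [? [? _]]. unfold rval. nra. }
    unfold Lall. rewrite sum_f_R0_concat. eapply Rle_trans; [|apply (Hs K)].
    right. apply sum_eq. intros i _. unfold F'. rewrite lsum_app. simpl. unfold rval; simpl. ring.
Qed.

Lemma prod_null_comps m1 m2 N (Nk : nat -> R -> R -> Prop) :
  m1 (fun _ => False) 0 -> m2 (fun _ => False) 0 ->
  (forall x y, N x y -> exists k, Nk k x y) -> (forall k, comp_null m1 m2 (Nk k)) ->
  prod_null m1 m2 N.
Proof.
  intros H1 H2 HN Hk. apply prod_null_lists; auto. intros eps Heps.
  assert (He : forall k, 0 < eps * (/2) ^ (S k)) by (intros; apply Rmult_lt_0_compat; auto; apply pow_lt; lra).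
  destruct (choice (fun k l => (forall r, In r l -> rvalid m1 m2 r) /\ lsum rval l <= eps * (/2) ^ (S k) /\
     (forall x y, Nk k x y -> exists r, In r l /\ rA r x /\ rB r y))) as [F HF];
    [intros k; apply (Hk k _ (He k))|].
  exists F. split; [|split].
  - intros k r Hr. apply (proj1 (HF k)); auto.
  - intros x y Hxy. destruct (HN x y Hxy) as [k Hk']. destruct (proj2 (proj2 (HF k)) x y Hk') as [r Hr].
    exists k, r; auto.
  - intros k. eapply Rle_trans; [|apply (sum_geom_eps eps k); lra].
    apply sum_Rle. intros n _. apply (HF n).
Qed.

Lemma comp_null_or m1 m2 S1 S2 : comp_null m1 m2 S1 -> comp_null m1 m2 S2 ->
  comp_null m1 m2 (fun x y => S1 x y \/ S2 x y).
Proof.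
  intros H1 H2 e He. destruct (H1 (e / 2) ltac:(lra)) as [l1 [V1 [B1 C1]]].
  destruct (H2 (e / 2) ltac:(lra)) as [l2 [V2 [B2 C2]]].
  exists (l1 ++ l2). split; [|split].
  - intros r Hr. apply in_app_or in Hr. destruct Hr; auto.
  - rewrite lsum_app. lra.
  - intros x y [Hxy|Hxy]; [destruct (C1 x y Hxy) as [r Hr]|destruct (C2 x y Hxy) as [r Hr]];
      exists r; rewrite in_app_iff; tauto.
Qed.

Lemma comp_null_box (m1 m2 : set_meas_le) A B b :
  (forall e, 0 < e -> m1 A e) -> m2 B b -> 0 <= b -> comp_null m1 m2 (fun x y => A x /\ B y).
Proof.
  intros HA HB Hb e He.
  exists (Rect A B (e / (b + 1)) b :: nil). split; [|split].
  - intros r [<-|[]]. unfold rvalid; simpl.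
    assert (0 < e / (b + 1)) by (apply Rdiv_lt_0_compat; lra). repeat split; auto; lra.
  - simpl. unfold rval; simpl. apply (Rmult_le_reg_r (b + 1)); [lra|].
    replace (e / (b + 1) * b + 0) with (e * b / (b + 1)) by (field; lra).
    unfold Rdiv. rewrite Rmult_assoc, Rinv_l by lra. nra.
  - intros x y [Hx Hy]. eexists; split; [left; reflexivity|]. simpl; auto.
Qed.

(** * Localized covers and fibre estimates *)

Definition affine_hit d E (q x y : R) : Prop :=
  q <> 0 /\ exists t, digitJ d E t /\ t = (1 - q) * x + q * y.


(* A set with a bound on its outer measure and a centre within which it is localized. *)
Record piece := Piece { pset : R -> Prop; pmass : R; pcentre : R }.

Definition fine_cover (m1 : set_meas_le) (X : R -> Prop) (K : R) :=
  forall h, 0 < h -> exists l : list piece,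
    (forall P, In P l -> 0 <= pmass P /\ m1 (pset P) (pmass P) /\
                        forall x, pset P x -> Rabs (x - pcentre P) <= h) /\
    (forall x, X x -> exists P, In P l /\ pset P x) /\
    lsum pmass l <= K.

Section Fibres.
Variable m1 : set_meas_le.
Variable X : R -> Prop.
Variable K : R.
Hypothesis hK : 0 <= K.
Hypothesis hX : fine_cover m1 X K.

Lemma fibre_rects S h (T : R -> R -> Prop) b : 0 < h -> 0 <= b ->
  (forall c x y, Rabs (x - c) <= h -> S x y -> T c y) -> (forall c, leb_le (T c) b) ->
  exists l : list rect, (forall r, In r l -> rvalid m1 leb_le r) /\
    lsum rval l <= K * b /\ (forall x y, X x -> S x y -> exists r, In r l /\ rA r x /\ rB r y).
Proof.
  intros Hh Hb HT Hleb. destruct (hX h Hh) as [l [Hl [Hcov Hsum]]].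
  set (mk := fun P => Rect (pset P) (T (pcentre P)) (pmass P) b).
  exists (map mk l). split; [|split].
  - intros r Hr. apply in_map_iff in Hr. destruct Hr as [P [<- HP]]. destruct (Hl P HP) as [H0 [H1 _]].
    unfold rvalid, mk; simpl. auto.
  - rewrite lsum_map. unfold rval, mk; simpl. rewrite (lsum_ext _ (fun P => b * pmass P)) by (intros; ring).
    rewrite lsum_scal. nra.
  - intros x y Hx Hxy. destruct (Hcov x Hx) as [P [HP Px]]. exists (mk P).
    split; [apply in_map; auto|]. unfold mk; simpl. split; auto. apply (HT _ x); auto. apply (Hl P HP); auto.
Qed.

Lemma comp_diag : comp_null m1 leb_le (fun x y => X x /\ x = y).
Proof.
  intros e He. set (h := e / (2 * (K + 1))).
  assert (Hh : 0 < h) by (unfold h; apply Rdiv_lt_0_compat; lra).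
  destruct (fibre_rects (fun x y => x = y) h (fun c => balls (c :: nil) h) (1 * (2 * h)) Hh ltac:(lra))
    as [l [Hv [Hs Hc]]].
  - intros c x y Hx <-. exists c. simpl. auto.
  - intros c. apply (leb_balls (c :: nil) h). lra.
  - exists l. split; auto. split; [|intros x y [Hx Hxy]; auto].
    eapply Rle_trans; [exact Hs|]. unfold h. apply (Rmult_le_reg_r (K + 1)); [lra|].
    replace (K * (1 * (2 * (e / (2 * (K + 1))))) * (K + 1)) with (K * e) by (field; lra). nra.
Qed.

Lemma affine_solve q x c h t c' ell : q <> 0 -> Rabs (x - c) <= h -> c' <= t <= c' + ell ->
  Rabs ((t - (1 - q) * x) / q - (c' - (1 - q) * c) / q) <= (ell + Rabs (1 - q) * h) / Rabs q.
Proof.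
  intros Hq Hx Ht.
  replace ((t - (1 - q) * x) / q - (c' - (1 - q) * c) / q)
    with (((t - c') - (1 - q) * (x - c)) * / q) by (field; auto).
  rewrite Rabs_mult, Rabs_inv. unfold Rdiv. apply Rmult_le_compat_r.
  { apply Rlt_le, Rinv_0_lt_compat, Rabs_pos_lt; auto. }
  eapply Rle_trans; [apply Rabs_triang|]. rewrite Rabs_Ropp, Rabs_mult.
  assert (Rabs (t - c') <= ell) by (apply Rabs_le_intro; lra).
  assert (Rabs (1 - q) * Rabs (x - c) <= Rabs (1 - q) * h) by (apply Rmult_le_compat_l; auto; apply Rabs_pos).
  lra.
Qed.

Variable d : nat.
Variable E : list nat.
Hypothesis hd : (2 <= d)%nat.
Hypothesis hE : forall e, In e E -> (e < d)%nat.
Hypothesis hpd : (length E < d)%nat.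

(* The points y over the h-neighbourhood of c that the level-m cylinders of J can
   reach through t = (1 - q) x + q y are the centres below, up to an error rho. *)
Definition affine_centres (q c : R) (m : nat) : list R :=
  map (fun w => (cyl_left d m w - (1 - q) * c) / q) (words E nil m).

Definition affine_radius (q h : R) (m : nat) : R := (/ INR d ^ m + Rabs (1 - q) * h) / Rabs q.

Lemma affine_fibre q m c h x y : q <> 0 -> Rabs (x - c) <= h ->
  (exists t, digitJ d E t /\ t = (1 - q) * x + q * y) ->
  balls (affine_centres q c m) (affine_radius q h m) y.
Proof.
  intros Hq Hx [t [Ht Hty]]. destruct (J_in_cylinder d E m t Ht) as [w [Hw Hcw]].
  exists ((cyl_left d m w - (1 - q) * c) / q).
  split; [apply (in_map (fun w => (cyl_left d m w - (1 - q) * c) / q)); auto|].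
  replace y with ((t - (1 - q) * x) / q) by (rewrite Hty; field; auto).
  apply affine_solve; auto. apply (cylinder_interval d E hd hE); auto.
Qed.

Lemma affine_budget e q Pm u v : 0 < e -> 0 < Rabs q -> 0 <= Pm ->
  Pm * u <= e * Rabs q / (4 * (K + 1)) -> Pm * v <= e * Rabs q / (4 * (K + 1)) ->
  K * (Pm * (2 * ((u + v) / Rabs q))) <= e.
Proof.
  intros He Hq HPm Hu Hv.
  assert (Hb : Pm * (2 * ((u + v) / Rabs q)) <= e / (K + 1)).
  { apply (Rmult_le_reg_r (Rabs q)); auto.
    replace (Pm * (2 * ((u + v) / Rabs q)) * Rabs q) with (2 * (Pm * u + Pm * v)) by (field; lra).
    replace (e / (K + 1) * Rabs q) with (4 * (e * Rabs q / (4 * (K + 1)))) by (field; lra). lra. }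
  apply Rle_trans with (K * (e / (K + 1))); [apply Rmult_le_compat_l; lra|].
  apply (Rmult_le_reg_r (K + 1)); [lra|].
  replace (K * (e / (K + 1)) * (K + 1)) with (K * e) by (field; lra). nra.
Qed.

Lemma small_scale a b tol : 0 <= a -> 0 <= b -> 0 < tol -> exists h, 0 < h /\ a * (b * h) <= tol.
Proof.
  intros Ha Hb Htol. exists (tol / ((a + 1) * (b + 1))). split; [apply Rdiv_lt_0_compat; nra|].
  apply (Rmult_le_reg_r ((a + 1) * (b + 1))); [nra|].
  replace (a * (b * (tol / ((a + 1) * (b + 1)))) * ((a + 1) * (b + 1))) with (a * b * tol) by (field; lra).
  nra.
Qed.

(* For q <> 0, the pairs over X with (1 - q) x + q y in J form a product-null set:
   each fibre lies in p^m balls of radius (d^-m + |1-q| h)/|q|. *)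
Lemma comp_affine q : comp_null m1 leb_le (fun x y => X x /\ affine_hit d E q x y).
Proof.
  intros e He. destruct (Req_dec q 0) as [Hq0|Hq].
  { exists nil. simpl. split; [tauto|split; [lra|]]. intros x y [_ [Hq _]]; tauto. }
  assert (Haq : 0 < Rabs q) by (apply Rabs_pos_lt; auto).
  pose proof (Rabs_pos (1 - q)) as Hq1.
  assert (Htol : 0 < e * Rabs q / (4 * (K + 1))) by (apply Rdiv_lt_0_compat; nra).
  destruct (ratio_small d E hd hpd _ Htol) as [m Hm].
  pose proof (pos_INR (length E ^ m)) as HPm.
  destruct (small_scale (INR (length E ^ m)) (Rabs (1 - q)) _ HPm Hq1 Htol) as [h [Hh Hh']].
  assert (Hrho : 0 <= affine_radius q h m).
  { assert (0 < / INR d ^ m) by (apply Rinv_0_lt_compat, pow_d_pos; auto).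
    apply Rmult_le_pos; [nra|apply Rlt_le, Rinv_0_lt_compat; auto]. }
  destruct (fibre_rects (fun x y => exists t, digitJ d E t /\ t = (1 - q) * x + q * y) h
              (fun c => balls (affine_centres q c m) (affine_radius q h m))
              (INR (length E ^ m) * (2 * affine_radius q h m)) Hh ltac:(nra)) as [l [Hv [Hs Hc]]].
  - intros c x y Hx Hxy. apply (affine_fibre q m c h x y); auto.
  - intros c. eapply leb_mono; [apply (leb_balls (affine_centres q c m) _ Hrho)|auto|].
    unfold affine_centres. rewrite length_map, words_length. lra.
  - exists l. split; auto. split; [|intros x y [Hx [_ Hxy]]; auto].
    eapply Rle_trans; [exact Hs|]. apply affine_budget; auto; lra.
Qed.

End Fibres.

(** * Fine covers of a unit interval and of J *)

Lemma nat_floor N t : 0 <= t <= INR N -> exists j, (j <= N)%nat /\ INR j <= t <= INR j + 1.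
Proof.
  induction N; intros Ht.
  - exists 0%nat. simpl in *. split; [lia|lra].
  - destruct (Rle_dec t (INR N)).
    + destruct IHN as [j [Hj Ht']]; [lra|]. exists j; split; [lia|auto].
    + exists N. split; [lia|]. rewrite S_INR in Ht. lra.
Qed.

Lemma grid_cover (M : R) (L : nat) x : (1 <= L)%nat -> M <= x <= M + 1 ->
  exists j, In j (seq 0 (S L)) /\ Rabs (x - (M + INR j / INR L)) <= / INR L.
Proof.
  intros HL Hx. assert (HL0 : 0 < INR L) by (apply (lt_INR 0); lia).
  destruct (nat_floor L ((x - M) * INR L)) as [j [Hj Ht]]; [split; nra|].
  exists j. split; [apply in_seq; lia|]. apply Rabs_le_intro.
  replace (x - (M + INR j / INR L)) with (((x - M) * INR L - INR j) / INR L) by (field; lra).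
  unfold Rdiv. assert (0 < / INR L) by (apply Rinv_0_lt_compat; auto). split; nra.
Qed.

Lemma fine_cover_interval (M : R) : fine_cover leb_le (fun x => M <= x <= M + 1) 4.
Proof.
  intros h Hh. destruct (eventually_small_inv 2 (le_n 2) h Hh) as [K HK].
  set (L := (2 ^ K)%nat). rewrite <- pow_INR in HK. fold L in HK.
  assert (HL : (1 <= L)%nat) by (unfold L; pose proof (Nat.pow_le_mono_l 1 2 K ltac:(lia)) as H1;
    rewrite Nat.pow_1_l in H1; lia).
  assert (HL0 : 1 <= INR L) by (apply (le_INR 1); auto).
  assert (Hi : 0 < / INR L) by (apply Rinv_0_lt_compat; lra).
  set (xc := fun j => M + INR j / INR L).
  exists (map (fun j => Piece (balls (xc j :: nil) (/ INR L)) (2 * / INR L) (xc j)) (seq 0 (S L))).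
  split; [|split].
  - intros P HP. apply in_map_iff in HP. destruct HP as [j [<- _]]. simpl. split; [lra|split].
    + eapply leb_mono; [apply (leb_balls (xc j :: nil) (/ INR L)); lra|auto|simpl; lra].
    + intros x [c [[<-|[]] Hx]]. lra.
  - intros x Hx. destruct (grid_cover M L x HL Hx) as [j [Hj Hxj]].
    eexists; split; [apply in_map, Hj|]. simpl. exists (xc j). simpl; auto.
  - rewrite lsum_map. simpl pmass. rewrite lsum_const, length_seq, S_INR.
    assert (INR L * / INR L = 1) by (field; lra).
    assert (/ INR L <= 1) by (rewrite <- Rinv_1; apply Rinv_le_contravar; lra). nra.
Qed.

Section FineCoverJ.
Variable d : nat.
Variable E : list nat.
Hypothesis hd : (2 <= d)%nat.
Hypothesis hE : forall e, In e E -> (e < d)%nat.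
Variable delta : R.
Hypothesis hdelta : 0 < delta.
Hypothesis hD : INR (length E) <= Rpower (INR d) delta.

Lemma fine_cover_J : fine_cover (haus_restr delta (digitJ d E)) (digitJ d E) 1.
Proof.
  intros h Hh. destruct (eventually_small_inv d hd h Hh) as [n Hn].
  set (D := Rpower (INR d) delta) in *.
  assert (HD0 : 0 < D) by (unfold D, Rpower; apply exp_pos).
  exists (map (fun v => Piece (cylinder d E n v) (/ D ^ n) (cyl_left d n v)) (words E nil n)).
  split; [|split].
  - intros P HP. apply in_map_iff in HP. destruct HP as [v [<- _]]. simpl.
    split; [apply Rlt_le, Rinv_0_lt_compat, pow_lt; auto|split].
    + apply haus_cylinder; auto.
    + intros x Hx. apply Rabs_le_intro. pose proof (cylinder_interval d E hd hE n v x Hx). lra.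
  - intros x Hx. destruct (J_in_cylinder d E n x Hx) as [v [Hv Hxv]].
    eexists; split; [apply in_map, Hv|]. auto.
  - rewrite lsum_map. simpl. rewrite lsum_const, words_length, pow_INR.
    assert (INR (length E) ^ n <= D ^ n) by (apply pow_incr; split; [apply pos_INR|auto]).
    assert (0 < D ^ n) by (apply pow_lt; auto).
    apply (Rmult_le_reg_r (D ^ n)); auto. rewrite Rmult_assoc, Rinv_l by lra. lra.
Qed.

End FineCoverJ.

(** * Decomposition of the exceptional sets *)

Lemma prod_null_union {I : Type} (enum : nat -> I) m1 m2 N (Nk : I -> R -> R -> Prop) :
  m1 (fun _ => False) 0 -> m2 (fun _ => False) 0 -> (forall i, exists n, enum n = i) ->
  (forall x y, N x y -> exists i, Nk i x y) -> (forall i, comp_null m1 m2 (Nk i)) ->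
  prod_null m1 m2 N.
Proof.
  intros H1 H2 Hsurj HN Hk. apply (prod_null_comps _ _ _ (fun n => Nk (enum n))); auto.
  intros x y Hxy. destruct (HN x y Hxy) as [i Hi]. destruct (Hsurj i) as [n <-]. eauto.
Qed.

Definition int_of_nat (n : nat) : Z := let (i, j) := Cantor.of_nat n in (Z.of_nat i - Z.of_nat j)%Z.

Definition triple_of_nat (n : nat) : Z * Z * Z :=
  let (a, b) := Cantor.of_nat n in let (c, e) := Cantor.of_nat b in
  (int_of_nat a, int_of_nat c, int_of_nat e).

Lemma int_of_nat_surj z : exists n, int_of_nat n = z.
Proof.
  exists (Cantor.to_nat (Z.to_nat z, Z.to_nat (- z))). unfold int_of_nat. rewrite Cantor.cancel_of_to. lia.
Qed.

Lemma triple_of_nat_surj c : exists n, triple_of_nat n = c.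
Proof.
  destruct c as [[M z1] z2].
  destruct (int_of_nat_surj M) as [a Ha]. destruct (int_of_nat_surj z1) as [b Hb].
  destruct (int_of_nat_surj z2) as [e He].
  exists (Cantor.to_nat (a, Cantor.to_nat (b, e))). unfold triple_of_nat.
  rewrite !Cantor.cancel_of_to, Ha, Hb, He. reflexivity.
Qed.

Definition cell (M : Z) (x : R) : Prop := IZR M <= x <= IZR M + 1.

Lemma unit_cell_measure M : leb_le (cell M) 1.
Proof. eapply leb_mono; [apply (leb_interval (IZR M) (IZR M + 1))|auto|]; lra. Qed.

Lemma cell_Int_part x : cell (Int_part x) x.
Proof. unfold cell. pose proof (base_Int_part x). lra. Qed.

Definition ratio (z1 z2 : Z) : R := IZR z1 / IZR z2.

Lemma ratio_Q2R q : Q2R q = ratio (Qnum q) (Zpos (Qden q)).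
Proof. reflexivity. Qed.

Lemma faff_eq x y t r : x <> y -> faff x y t = r -> t = (1 - r) * x + r * y.
Proof.
  intros Hxy H. unfold faff in H. assert (y - x <> 0) by lra.
  rewrite <- H. field. auto.
Qed.

Definition piece_i d E (c : Z * Z * Z) (x y : R) : Prop :=
  let '(M, z1, z2) := c in
  (cell M x /\ x = y) \/ (digitJ d E x /\ cell M y) \/ (cell M x /\ affine_hit d E (ratio z1 z2) x y).

Definition piece_ii d E (c : Z * Z * Z) (x y : R) : Prop :=
  let '(M, z1, z2) := c in
  (~ digitJ d E x /\ cell M y) \/ (digitJ d E x /\ x = y) \/
  (digitJ d E x /\ affine_hit d E (ratio z1 z2) x y).

(* Every exceptional pair of (i) lies in some piece: either x = y, or some t in J
   is sent to a rational q, which is either 0 (so x = t) or nonzero. *)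
Lemma exceptional_i_pieces d E x y :
  ~ (x <> y /\ forall t (q : Q), digitJ d E t -> faff x y t <> Q2R q) ->
  exists c, piece_i d E c x y.
Proof.
  intros Hxy. destruct (Req_dec x y) as [Heq|Hne].
  { exists (Int_part x, 0%Z, 0%Z). left. split; [apply cell_Int_part|auto]. }
  assert (Hex : exists t q, digitJ d E t /\ faff x y t = Q2R q).
  { apply NNPP. intro Hn. apply Hxy. split; auto. intros t q Ht Hf. apply Hn. eauto. }
  destruct Hex as [t [q [Ht Hf]]]. pose proof (faff_eq x y t _ Hne Hf) as Ht'.
  destruct (Req_dec (Q2R q) 0) as [Hq0|Hq0].
  - exists (Int_part y, 0%Z, 0%Z). right; left. split; [|apply cell_Int_part].
    rewrite Hq0 in Ht'. replace x with t by lra. auto.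
  - exists (Int_part x, Qnum q, Zpos (Qden q)). right; right. rewrite <- ratio_Q2R.
    split; [apply cell_Int_part|]. split; eauto.
Qed.

(* Every exceptional pair of (ii) lies in some piece: x is outside J, or x = y, or
   some t in J is sent to a nonzero rational. *)
Lemma exceptional_ii_pieces d E x y :
  ~ (x <> y /\ forall r, ((exists t, digitJ d E t /\ faff x y t = r) /\
                         (exists q : Q, r = Q2R q)) <-> r = 0) ->
  exists c, piece_ii d E c x y.
Proof.
  intros Hxy. destruct (classic (digitJ d E x)) as [HJ|HJ].
  2:{ exists (Int_part y, 0%Z, 0%Z). left. split; [auto|apply cell_Int_part]. }
  destruct (Req_dec x y) as [Heq|Hne]; [exists (0%Z, 0%Z, 0%Z); right; left; auto|].
  assert (Hex : exists t q, digitJ d E t /\ faff x y t = Q2R q /\ Q2R q <> 0).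
  { apply NNPP. intro Hn. apply Hxy. split; auto. intros r. split.
    - intros [[t [Ht Hf]] [q Hq]]. subst r. apply NNPP. intro Hq0. apply Hn. exists t, q.
      rewrite <- Hq. auto.
    - intros ->. split.
      + exists x. split; auto. unfold faff, Rdiv. rewrite Rminus_diag. ring.
      + exists 0%Q. unfold Q2R. simpl. ring. }
  destruct Hex as [t [q [Ht [Hf Hq0]]]]. pose proof (faff_eq x y t _ Hne Hf) as Ht'.
  exists (0%Z, Qnum q, Zpos (Qden q)). right; right. rewrite <- ratio_Q2R. split; auto. split; eauto.
Qed.

Section Pieces.
Variable d : nat.
Variable E : list nat.
Hypothesis hd : (2 <= d)%nat.
Hypothesis hE : forall e, In e E -> (e < d)%nat.
Hypothesis hpd : (length E < d)%nat.

(* Each piece of (i) is lambda x lambda-null: the diagonal and the affine parts by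
   the fibre estimates over a unit cell, and J x [M, M+1] since lambda(J) = 0. *)
Lemma comp_piece_i c : comp_null leb_le leb_le (piece_i d E c).
Proof.
  destruct c as [[M z1] z2]. unfold piece_i.
  apply comp_null_or; [|apply comp_null_or].
  - apply (comp_diag leb_le (cell M) 4); [lra|apply fine_cover_interval].
  - apply (comp_null_box _ _ _ _ 1); [|apply unit_cell_measure|lra].
    intros e He. destruct (ratio_small d E hd hpd e He) as [m Hm].
    eapply leb_mono; [apply (leb_J d E hd hE m)|auto|lra].
  - apply (comp_affine leb_le (cell M) 4 ltac:(lra) (fine_cover_interval (IZR M)) d E hd hE hpd).
Qed.

Variable delta : R.
Hypothesis hdelta : 0 < delta.
Hypothesis hD : INR (length E) <= Rpower (INR d) delta.

(* Each piece of (ii) is mu x lambda-null: (R \ J) x [M, M+1] since mu lives on J,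
   the other two parts by the fibre estimates over the cylinder covers of J. *)
Lemma comp_piece_ii c : comp_null (haus_restr delta (digitJ d E)) leb_le (piece_ii d E c).
Proof.
  destruct c as [[M z1] z2]. unfold piece_ii.
  pose proof (fine_cover_J d E hd hE delta hdelta hD) as HJ.
  apply comp_null_or; [|apply comp_null_or].
  - apply (comp_null_box _ _ _ _ 1); [|apply unit_cell_measure|lra].
    intros e He. apply haus_mono with (A := fun _ => False) (r := 0); [apply haus_empty; auto|tauto|lra].
  - apply (comp_diag _ _ 1 ltac:(lra) HJ).
  - apply (comp_affine _ _ 1 ltac:(lra) HJ d E hd hE hpd).
Qed.

End Pieces.

Theorem mainTheorem3 (d : nat) (E : list nat) (delta : R) :
  (2 <= d)%nat ->
  NoDup E -> (forall e, In e E -> (e < d)%nat) ->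
  (1 < length E)%nat -> (length E < d)%nat ->
  hausdorff_dim (digitJ d E) delta ->
  (* (i) lambda x lambda - a.e. (x,y): f_{x,y}(J) ∩ Q = ∅ *)
  prod_null leb_le leb_le
    (fun x y => ~ (x <> y /\
        forall t (q : Q), digitJ d E t -> faff x y t <> Q2R q)) /\
  (* (ii) mu x lambda - a.e. (x,y): f_{x,y}(J) ∩ Q = {0} *)
  prod_null (haus_restr delta (digitJ d E)) leb_le
    (fun x y => ~ (x <> y /\
        forall r, ((exists t, digitJ d E t /\ faff x y t = r) /\
                   (exists q : Q, r = Q2R q)) <-> r = 0)).
Proof.
  intros hd hnd hE hp1 hpd hdim.
  destruct (dim_ge d E delta hd hE hnd hp1 hdim) as [hD hdelta].
  split.
  - apply (prod_null_union triple_of_nat _ _ _ (piece_i d E)); [apply leb_empty|apply leb_empty| | |].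
    + apply triple_of_nat_surj.
    + apply exceptional_i_pieces.
    + apply comp_piece_i; auto.
  - apply (prod_null_union triple_of_nat _ _ _ (piece_ii d E)); [|apply leb_empty| | |].
    + apply haus_empty; auto. intros x [[] _].
    + apply triple_of_nat_surj.
    + apply exceptional_ii_pieces.
    + apply comp_piece_ii; auto.
Qed.
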